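(* Let $k\ge1$ and let $q_1,q_2$ be Gaussian beams of degree $k$ with poles $x_1,x_2\in\mathbb S^2$ respectively, and let $G_1,G_2$ be the great circles perpendicular to $x_1,x_2$. Let $0\le\beta\le\pi$ be the angle between $x_1$ and $x_2$. Then $$\langle q_1,q_2\rangle=\int_{\mathbb S^2}q_1\overline{q_2}=e^{ik\alpha}\left(\cos\frac\beta2\right)^{2k},$$ where $e^{ik\alpha}$, $\alpha\in[-\pi/k,\pi/k)$, is the phase shift at the intersection points of $G_1$ and $G_2$, namely $$e^{ik\alpha}=\frac{q_1(y_1)}{q_2(y_1)}=\frac{q_1(y_2)}{q_2(y_2)},$$ $y_1,y_2$ being the two intersection points of $G_1$ and $G_2$; if the poles coincide, $e^{ik\alpha}=q_1(y)/q_2(y)$ for any point $y$ where they do not vanish.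
   Context: $\mathbb S^2\subset\mathbb R^3$ is the round unit sphere with coordinates $x=(\sin\phi\cos\theta,\sin\phi\sin\theta,\cos\phi)$. The standard Gaussian beam of degree $k$ is $Q_k(\phi,\theta)=C_kP_k^k(\cos\phi)e^{ik\theta}$, where $P_k^k$ is the associated Legendre function and $C_k>0$ normalizes $\|Q_k\|_{L^2(\mathbb S^2)}=1$; it has pole the north pole $(0,0,1)$, concentrates on the equator and propagates in the positive direction (right-hand rule). A Gaussian beam of degree $k$ with pole $x\in\mathbb S^2$ is a function of the form $q(y)=e^{ic}Q_k(Ry)$, $c\in\mathbb R$, where $R\in SO(3)$ satisfies $Rx=(0,0,1)$; its modulus is maximal on the great circle perpendicular to $x$. *)

From Stdlib Require Import Reals ClassicalEpsilon Factorial.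
From Coquelicot Require Import Coquelicot.
Open Scope R_scope.

Record vec3 := mkv { v1 : R; v2 : R; v3 : R }.
Definition dot (a b : vec3) : R := v1 a * v1 b + v2 a * v2 b + v3 a * v3 b.
Definition vopp (a : vec3) : vec3 := mkv (- v1 a) (- v2 a) (- v3 a).
Definition cross (a b : vec3) : vec3 :=
  mkv (v2 a * v3 b - v3 a * v2 b) (v3 a * v1 b - v1 a * v3 b) (v1 a * v2 b - v2 a * v1 b).
Definition on_sphere (a : vec3) : Prop := dot a a = 1.
Definition north : vec3 := mkv 0 0 1.

Record mat3 := mkm { r1 : vec3; r2 : vec3; r3 : vec3 }.
Definition mapply (M : mat3) (a : vec3) : vec3 := mkv (dot (r1 M) a) (dot (r2 M) a) (dot (r3 M) a).
Definition det3 (M : mat3) : R := dot (r1 M) (cross (r2 M) (r3 M)).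
Definition SO3 (M : mat3) : Prop :=
  dot (r1 M) (r1 M) = 1 /\ dot (r2 M) (r2 M) = 1 /\ dot (r3 M) (r3 M) = 1 /\
  dot (r1 M) (r2 M) = 0 /\ dot (r1 M) (r3 M) = 0 /\ dot (r2 M) (r3 M) = 0 /\
  det3 M = 1.

Definition sph (phi theta : R) : vec3 :=
  mkv (sin phi * cos theta) (sin phi * sin theta) (cos phi).

Definition cis (t : R) : C := (cos t, sin t).

(* Legendre polynomial (Rodrigues) and associated Legendre function
   P_l^m(x) = (-1)^m (1-x^2)^{m/2} d^m/dx^m P_l(x)  (Condon-Shortley phase) *)
Definition Legendre (l : nat) (x : R) : R :=
  / (2 ^ l * INR (Factorial.fact l)) * Derive_n (fun t => (t ^ 2 - 1) ^ l) l x.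
Definition assocLegendre (l m : nat) (x : R) : R :=
  (-1) ^ m * (sqrt (1 - x ^ 2)) ^ m * Derive_n (Legendre l) m x.

Definition sphere_int (f : vec3 -> C) : C :=
  RInt (V := C_R_CompleteNormedModule) (fun phi => RInt (V := C_R_CompleteNormedModule) (fun theta => Cmult (RtoC (sin phi)) (f (sph phi theta))) 0 (2 * PI)) 0 PI.

Definition Q0c (k : nat) (phi theta : R) : C :=
  Cmult (RtoC (assocLegendre k k (cos phi))) (cis (INR k * theta)).

Definition Ck (k : nat) : R :=
  / sqrt (fst (RInt (V := C_R_CompleteNormedModule) (fun phi => RInt (V := C_R_CompleteNormedModule) (fun theta =>
        Cmult (RtoC (sin phi)) (Cmult (Q0c k phi theta) (Cconj (Q0c k phi theta)))) 0 (2 * PI)) 0 PI)).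

Definition Qc (k : nat) (phi theta : R) : C := Cmult (RtoC (Ck k)) (Q0c k phi theta).

Definition coords (z : vec3) : R * R :=
  epsilon (inhabits (0, 0)) (fun p => 0 <= fst p <= PI /\ sph (fst p) (snd p) = z).
Definition Qpt (k : nat) (z : vec3) : C := Qc k (fst (coords z)) (snd (coords z)).

Definition is_gaussian_beam (k : nat) (x : vec3) (q : vec3 -> C) : Prop :=
  exists (M : mat3) (c : R), SO3 M /\ mapply M x = north /\
    forall y, on_sphere y -> q y = Cmult (cis c) (Qpt k (mapply M y)).

Definition great_circle (x y : vec3) : Prop := on_sphere y /\ dot x y = 0.

(* On the sphere the standard beam is [K (x + i y)^k], so a beam with pole [x_j] is
   [e^{i c_j} K (u_1 + i u_2)^k] with [u = M_j y] for a rotation [M_j] whose third row is [x_j].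
   The integral over the sphere of a polynomial is rotation invariant: writing a rotation as
   [R_z R_x R_z], and [R_x] as [R_z] conjugated by the cyclic permutation of coordinates, this
   reduces to periodicity in the longitude and to the cyclic symmetry of the moments of the sphere,
   which follows from their integration-by-parts recurrences.  Rotating by [M_1] and by the last
   Euler angle turns the overlap into that of [(x + i y)^k] with its rotation by [beta] about the
   x-axis, where [cos beta = x_1 . x_2]; on each parallel this is a polynomial in [e^{i theta}]
   whose mean is its constant term, giving [((1 + cos beta) / 2)^k] times the squared norm of the
   beam.  The phases collected on the way are exactly those relating [q_1] and [q_2] at the points
   fixed by that rotation, i.e. on the intersection of the two great circles. *)

From Stdlib Require Import Reals Lra Lia List Factorial ClassicalEpsilon Wf_nat.
From Coquelicot Require Import Coquelicot.
Open Scope R_scope.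

Lemma is_RInt_antiderivative (F f : R -> R) a b :
  (forall t, is_derive F t (f t)) -> (forall t, continuous f t) -> is_RInt f a b (F b - F a).
Proof. intros HF Hf. apply (is_RInt_derive (V := R_CompleteNormedModule)); auto. Qed.

Lemma RInt_antiderivative (F f : R -> R) a b :
  (forall t, is_derive F t (f t)) -> (forall t, continuous f t) -> RInt f a b = F b - F a.
Proof. intros HF Hf. apply is_RInt_unique, is_RInt_antiderivative; auto. Qed.

Lemma continuous_of_ex_derive (f : R -> R) x : ex_derive f x -> continuous f x.
Proof. apply (ex_derive_continuous (K := R_AbsRing) (V := R_NormedModule)). Qed.

Definition sc_int (a b : R) (p c : nat) : R := RInt (fun t => sin t ^ p * cos t ^ c) a b.

Lemma continuous_sin_cos_pow p c t : continuous (fun t => sin t ^ p * cos t ^ c) t.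
Proof. apply continuous_of_ex_derive. auto_derive. auto. Qed.

Lemma ex_RInt_sin_cos_pow a b p c : ex_RInt (fun t => sin t ^ p * cos t ^ c) a b.
Proof.
  apply (ex_RInt_continuous (V := R_CompleteNormedModule)). intros; apply continuous_sin_cos_pow.
Qed.

Lemma is_RInt_sc_int a b p c : is_RInt (fun t => sin t ^ p * cos t ^ c) a b (sc_int a b p c).
Proof. apply (RInt_correct (V := R_CompleteNormedModule)), ex_RInt_sin_cos_pow. Qed.

Lemma sc_int_pythag a b p c : sc_int a b p (S (S c)) = sc_int a b p c - sc_int a b (S (S p)) c.
Proof.
  unfold sc_int. rewrite <- (RInt_minus (V := R_CompleteNormedModule)) by apply ex_RInt_sin_cos_pow.
  apply RInt_ext. intros t _. pose proof (sin2_cos2 t) as H. unfold Rsqr in H.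
  unfold minus, plus, opp; simpl. replace (cos t * (cos t * cos t ^ c)) with ((1 - sin t * sin t) * cos t ^ c)
    by (rewrite <- H; ring).
  ring.
Qed.

(* Integration by parts of [d/dt (sin^(p+1) cos^(c+1))]. *)
Lemma sc_int_parts a b p c : sin a = 0 -> sin b = 0 ->
  INR (S p) * sc_int a b p (S (S c)) = INR (S c) * sc_int a b (S (S p)) c.
Proof.
  intros Ha Hb.
  assert (H : RInt (fun t => INR (S p) * (sin t ^ p * cos t ^ S (S c))
                             - INR (S c) * (sin t ^ S (S p) * cos t ^ c)) a b = 0).
  { rewrite (RInt_antiderivative (fun t => sin t ^ S p * cos t ^ S c)).
    - rewrite Ha, Hb. simpl. ring.
    - intro t. auto_derive; auto. simpl. ring.
    - intro t. apply continuous_of_ex_derive. auto_derive. auto. }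
  rewrite (RInt_minus (V := R_CompleteNormedModule)) in H.
  2, 3: apply (ex_RInt_scal (V := R_CompleteNormedModule)), ex_RInt_sin_cos_pow.
  rewrite !(RInt_scal (V := R_CompleteNormedModule)) in H by apply ex_RInt_sin_cos_pow.
  fold (sc_int a b p (S (S c))) (sc_int a b (S (S p)) c) in H.
  change (INR (S p) * sc_int a b p (S (S c)) - INR (S c) * sc_int a b (S (S p)) c = 0) in H. lra.
Qed.

Lemma sc_int_rec_sin a b p c : sin a = 0 -> sin b = 0 ->
  (INR p + INR c + 2) * sc_int a b (S (S p)) c = (INR p + 1) * sc_int a b p c.
Proof.
  intros Ha Hb. pose proof (sc_int_parts a b p c Ha Hb) as H. rewrite sc_int_pythag in H.
  rewrite !S_INR in H. lra.
Qed.

Lemma sc_int_rec_cos a b p c : sin a = 0 -> sin b = 0 ->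
  (INR p + INR c + 2) * sc_int a b p (S (S c)) = (INR c + 1) * sc_int a b p c.
Proof.
  intros Ha Hb. pose proof (sc_int_parts a b p c Ha Hb) as H.
  pose proof (sc_int_pythag a b p c) as E. rewrite !S_INR in H. nra.
Qed.

Lemma sc_int_cos1 a b p : sin a = 0 -> sin b = 0 -> sc_int a b p 1 = 0.
Proof.
  intros Ha Hb.
  assert (H : INR (S p) * sc_int a b p 1 = 0).
  { unfold sc_int. rewrite <- (RInt_scal (V := R_CompleteNormedModule)) by apply ex_RInt_sin_cos_pow.
    unfold scal; simpl; unfold mult; simpl.
    rewrite (RInt_antiderivative (fun t => sin t ^ S p)).
    - rewrite Ha, Hb. simpl. ring.
    - intro t. auto_derive; auto. simpl. ring.
    - intro t. apply continuous_of_ex_derive. auto_derive. auto. }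
  pose proof (pos_INR p). rewrite S_INR in H. nra.
Qed.

Lemma sc_int_sin1 a b c : cos a = cos b -> sc_int a b 1 c = 0.
Proof.
  intro Hab.
  assert (H : INR (S c) * sc_int a b 1 c = 0).
  { unfold sc_int. rewrite <- (RInt_scal (V := R_CompleteNormedModule)) by apply ex_RInt_sin_cos_pow.
    unfold scal; simpl; unfold mult; simpl.
    rewrite (RInt_antiderivative (fun t => - cos t ^ S c)).
    - rewrite Hab. ring.
    - intro t. auto_derive; auto. simpl. ring.
    - intro t. apply continuous_of_ex_derive. auto_derive. auto. }
  pose proof (pos_INR c). rewrite S_INR in H. nra.
Qed.

Lemma sc_int_sin_odd_pos k : 0 < sc_int 0 PI (2 * k + 1) 0.
Proof.
  induction k as [|k IH].
  - unfold sc_int. rewrite (RInt_antiderivative (fun t => - cos t)).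
    + rewrite cos_PI, cos_0. lra.
    + intro t. auto_derive; auto. simpl. ring.
    + intro t. apply continuous_sin_cos_pow.
  - pose proof (sc_int_rec_sin 0 PI (2 * k + 1) 0 sin_0 sin_PI) as H.
    replace (S (S (2 * k + 1))) with (2 * S k + 1)%nat in H by lia.
    pose proof (pos_INR (2 * k + 1)). simpl INR at 2 in H. nra.
Qed.

(** * Moments of the sphere *)

(* [sphere_moment a b c] is the integral of [x^a y^b z^c] over the unit sphere. *)
Definition sphere_moment (a b c : nat) : R := sc_int 0 (2 * PI) b a * sc_int 0 PI (a + b + 1) c.

(* The recurrences come from integration by parts and determine [m] from [m 0 0 0]; unlike the
   formula for [sphere_moment], they are visibly invariant under cyclic permutation of [a, b, c]. *)
Definition moment_recursive (m : nat -> nat -> nat -> R) : Prop :=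
  (forall a b c, (INR a + INR b + INR c + 3) * m (S (S a)) b c = (INR a + 1) * m a b c) /\
  (forall a b c, (INR a + INR b + INR c + 3) * m a (S (S b)) c = (INR b + 1) * m a b c) /\
  (forall a b c, (INR a + INR b + INR c + 3) * m a b (S (S c)) = (INR c + 1) * m a b c) /\
  (forall b c, m 1%nat b c = 0) /\ (forall a c, m a 1%nat c = 0) /\ (forall a b, m a b 1%nat = 0).

Lemma recurrence_eq (k d u u' v v' : R) :
  k <> 0 -> k * u = d * v -> k * u' = d * v' -> v = v' -> u = u'.
Proof. intros Hk Hu Hu' Hv. apply (Rmult_eq_reg_l k); congruence. Qed.

Lemma moment_recursive_unique m m' : moment_recursive m -> moment_recursive m' ->
  m 0%nat 0%nat 0%nat = m' 0%nat 0%nat 0%nat -> forall a b c, m a b c = m' a b c.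
Proof.
  intros [Ra [Rb [Rc [Za [Zb Zc]]]]] [Ra' [Rb' [Rc' [Za' [Zb' Zc']]]]] H0 a b c.
  remember (a + b + c)%nat as n eqn:Hn. revert a b c Hn.
  induction n as [n IH] using lt_wf_ind. intros a b c Hn.
  assert (Hk : forall x y z, INR x + INR y + INR z + 3 <> 0).
  { intros x y z. pose proof (pos_INR x). pose proof (pos_INR y). pose proof (pos_INR z). lra. }
  destruct a as [|[|a]]; [| now rewrite Za, Za' |].
  2: { eapply recurrence_eq; [apply Hk | apply Ra | apply Ra' | apply (IH (a + b + c)%nat); lia]. }
  destruct b as [|[|b]]; [| now rewrite Zb, Zb' |].
  2: { eapply recurrence_eq; [apply Hk | apply Rb | apply Rb' | apply (IH (0 + b + c)%nat); lia]. }
  destruct c as [|[|c]]; [exact H0 | now rewrite Zc, Zc' |].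
  eapply recurrence_eq; [apply Hk | apply Rc | apply Rc' | apply (IH (0 + 0 + c)%nat); lia].
Qed.

Lemma moment_recursive_cycle m : moment_recursive m -> moment_recursive (fun a b c => m c a b).
Proof.
  intros [Ra [Rb [Rc [Za [Zb Zc]]]]]. repeat split; intros.
  - rewrite <- Rb. ring.
  - rewrite <- Rc. ring.
  - rewrite <- Ra. ring.
  - apply Zb.
  - apply Zc.
  - apply Za.
Qed.

Lemma sphere_moment_recursive : moment_recursive sphere_moment.
Proof.
  pose proof sin_2PI as sin2PI.
  unfold sphere_moment. repeat split; intros.
  - replace (S (S a) + b + 1)%nat with (S (S (a + b + 1))) by lia.
    pose proof (sc_int_rec_cos 0 (2 * PI) b a sin_0 sin2PI) as Ht.
    pose proof (sc_int_rec_sin 0 PI (a + b + 1) c sin_0 sin_PI) as Hs.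
    rewrite !plus_INR in Hs. simpl INR in Hs.
    pose proof (pos_INR a). pose proof (pos_INR b).
    apply (Rmult_eq_reg_l (INR b + INR a + 2)); [|lra].
    transitivity ((INR b + INR a + 2) * sc_int 0 (2 * PI) b (S (S a))
                  * ((INR a + INR b + 1 + INR c + 2) * sc_int 0 PI (S (S (a + b + 1))) c)); [ring|].
    rewrite Ht, Hs. ring.
  - replace (a + S (S b) + 1)%nat with (S (S (a + b + 1))) by lia.
    pose proof (sc_int_rec_sin 0 (2 * PI) b a sin_0 sin2PI) as Ht.
    pose proof (sc_int_rec_sin 0 PI (a + b + 1) c sin_0 sin_PI) as Hs.
    rewrite !plus_INR in Hs. simpl INR in Hs.
    pose proof (pos_INR a). pose proof (pos_INR b).
    apply (Rmult_eq_reg_l (INR b + INR a + 2)); [|lra].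
    transitivity ((INR b + INR a + 2) * sc_int 0 (2 * PI) (S (S b)) a
                  * ((INR a + INR b + 1 + INR c + 2) * sc_int 0 PI (S (S (a + b + 1))) c)); [ring|].
    rewrite Ht, Hs. ring.
  - pose proof (sc_int_rec_cos 0 PI (a + b + 1) c sin_0 sin_PI) as Hs.
    rewrite !plus_INR in Hs. simpl INR in Hs.
    transitivity (sc_int 0 (2 * PI) b a
                  * ((INR a + INR b + 1 + INR c + 2) * sc_int 0 PI (a + b + 1) (S (S c)))); [ring|].
    rewrite Hs. ring.
  - rewrite sc_int_cos1 by (apply sin_0 || apply sin2PI). ring.
  - rewrite sc_int_sin1 by (rewrite cos_2PI, cos_0; reflexivity). ring.
  - rewrite sc_int_cos1 by (apply sin_0 || apply sin_PI). ring.
Qed.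

Lemma sphere_moment_cycle a b c : sphere_moment a b c = sphere_moment c a b.
Proof.
  apply (moment_recursive_unique sphere_moment (fun a b c => sphere_moment c a b)); auto.
  - apply sphere_moment_recursive.
  - apply moment_recursive_cycle, sphere_moment_recursive.
Qed.

(** * Polynomials on R^3 *)

Notation is_RInt_C := (is_RInt (V := C_R_CompleteNormedModule)).
Notation is_RInt_unique_C := (is_RInt_unique (V := C_R_CompleteNormedModule)).
Ltac C_ring := apply injective_projections; simpl; ring.

Lemma is_RInt_C_ext (f g : R -> C) a b l :
  (forall t, f t = g t) -> is_RInt_C f a b l -> is_RInt_C g a b l.
Proof. intros H Hf. apply (is_RInt_ext f); auto. Qed.

Lemma RInt_ext_C (f g : R -> C) a b : (forall x, Rmin a b < x < Rmax a b -> f x = g x) ->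
  RInt (V := C_R_CompleteNormedModule) f a b = RInt (V := C_R_CompleteNormedModule) g a b.
Proof. apply (RInt_ext (V := C_R_CompleteNormedModule)). Qed.

Lemma is_RInt_C_intro (f : R -> C) a b (l : C) :
  is_RInt (fun t => fst (f t)) a b (fst l) -> is_RInt (fun t => snd (f t)) a b (snd l) ->
  is_RInt_C f a b l.
Proof.
  intros H1 H2. destruct l as [l1 l2].
  exact (is_RInt_fct_extend_pair (U := R_NormedModule) (V := R_NormedModule) f a b l1 l2 H1 H2).
Qed.

Lemma is_RInt_C_fst (f : R -> C) a b l : is_RInt_C f a b l -> is_RInt (fun t => fst (f t)) a b (fst l).
Proof. apply (is_RInt_fct_extend_fst (U := R_NormedModule) (V := R_NormedModule)). Qed.

Lemma is_RInt_C_snd (f : R -> C) a b l : is_RInt_C f a b l -> is_RInt (fun t => snd (f t)) a b (snd l).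
Proof. apply (is_RInt_fct_extend_snd (U := R_NormedModule) (V := R_NormedModule)). Qed.

Lemma is_RInt_R0 a b : is_RInt (fun _ => 0) a b 0.
Proof.
  pose proof (is_RInt_const (V := R_NormedModule) a b 0) as H.
  replace (scal (b - a) (0 : R_NormedModule)) with 0 in H; [exact H|].
  unfold scal; simpl; unfold mult; simpl. ring.
Qed.

Lemma is_RInt_RtoC (f : R -> R) a b l : is_RInt f a b l -> is_RInt_C (fun t => RtoC (f t)) a b (RtoC l).
Proof.
  intro H. apply is_RInt_C_intro; [exact H | apply is_RInt_R0].
Qed.

Lemma is_RInt_Cplus (f g : R -> C) a b lf lg : is_RInt_C f a b lf -> is_RInt_C g a b lg ->
  is_RInt_C (fun t => Cplus (f t) (g t)) a b (Cplus lf lg).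
Proof.
  intros Hf Hg. apply is_RInt_C_intro; simpl;
    apply (is_RInt_plus (V := R_NormedModule)); auto using is_RInt_C_fst, is_RInt_C_snd.
Qed.

Lemma is_RInt_Cmult_l (c : C) (f : R -> C) a b l : is_RInt_C f a b l ->
  is_RInt_C (fun t => Cmult c (f t)) a b (Cmult c l).
Proof.
  intros Hf. apply is_RInt_C_fst in Hf as H1. apply is_RInt_C_snd in Hf as H2.
  apply is_RInt_C_intro; simpl.
  - apply (is_RInt_minus (V := R_NormedModule)); apply (is_RInt_scal (V := R_NormedModule)); auto.
  - apply (is_RInt_plus (V := R_NormedModule)); apply (is_RInt_scal (V := R_NormedModule)); auto.
Qed.

Definition monomial : Type := (nat * nat * nat)%type.

Definition mono (e : monomial) (z : vec3) : R :=
  let '(a, b, c) := e in v1 z ^ a * v2 z ^ b * v3 z ^ c.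

(* A polynomial is a list of (coefficient, exponent) pairs; [lincomb l F] replaces each monomial
   [e] by [F e], so that both evaluation and integration are instances of it. *)
Definition poly3 : Type := list (C * monomial).

Fixpoint lincomb (l : poly3) (F : monomial -> R) : C :=
  match l with
  | nil => RtoC 0
  | (c, e) :: l' => Cplus (Cmult c (RtoC (F e))) (lincomb l' F)
  end.

Definition peval (l : poly3) (z : vec3) : C := lincomb l (fun e => mono e z).

Lemma lincomb_scale_R (s : R) l F : Cmult (RtoC s) (lincomb l F) = lincomb l (fun e => s * F e).
Proof.
  induction l as [|[c e] l IH]; simpl; rewrite <- ?IH, ?RtoC_mult; ring.
Qed.

Lemma lincomb_map_monomial (h : monomial -> monomial) l F :
  lincomb (map (fun p => (fst p, h (snd p))) l) F = lincomb l (fun e => F (h e)).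
Proof. induction l as [|[c e] l IH]; simpl; congruence. Qed.

Lemma lincomb_scale_coef c l F :
  lincomb (map (fun p => (Cmult c (fst p), snd p)) l) F = Cmult c (lincomb l F).
Proof. induction l as [|[d e] l IH]; simpl; rewrite ?IH; ring. Qed.

Lemma lincomb_ext l F G : (forall e, F e = G e) -> lincomb l F = lincomb l G.
Proof. intro H. induction l as [|[c e] l IH]; simpl; rewrite ?H, ?IH; reflexivity. Qed.

Lemma is_RInt_lincomb l (F : monomial -> R -> R) (V : monomial -> R) a b :
  (forall e, is_RInt (F e) a b (V e)) ->
  is_RInt_C (fun t => lincomb l (fun e => F e t)) a b (lincomb l V).
Proof.
  intro HF. induction l as [|[c e] l IH]; simpl.
  - apply (is_RInt_RtoC (fun _ => 0)), is_RInt_R0.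
  - apply is_RInt_Cplus; auto. apply is_RInt_Cmult_l, is_RInt_RtoC, HF.
Qed.

Definition moment (e : monomial) : R := let '(a, b, c) := e in sphere_moment a b c.

(* Integral of [sin phi * mono e] along the parallel of colatitude [phi]. *)
Definition parallel_moment (e : monomial) (phi : R) : R :=
  let '(a, b, c) := e in sc_int 0 (2 * PI) b a * (sin phi ^ (a + b + 1) * cos phi ^ c).

Lemma RInt_periodic_shift (g : R -> R) T t :
  (forall x, continuous g x) -> (forall x, g (x + T) = g x) ->
  RInt (fun x => g (x + t)) 0 T = RInt g 0 T.
Proof.
  intros Hc Hp.
  assert (Ex : forall a b, ex_RInt g a b)
    by (intros; apply (ex_RInt_continuous (V := R_CompleteNormedModule)); auto).
  assert (Htranslate : forall a b s, RInt (fun x => g (x + s)) a b = RInt g (a + s) (b + s)).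
  { intros a b s. rewrite <- (RInt_ext (fun y => scal 1 (g (1 * y + s)))).
    - rewrite (RInt_comp_lin (V := R_CompleteNormedModule)). f_equal; ring.
      replace (1 * a + s) with (a + s) by ring. replace (1 * b + s) with (b + s) by ring. apply Ex.
    - intros x _. unfold scal; simpl; unfold mult; simpl. rewrite !Rmult_1_l. reflexivity. }
  rewrite Htranslate. replace (0 + t) with t by ring.
  rewrite <- (RInt_Chasles g t T (T + t)) by apply Ex.
  assert (Hwrap : RInt g T (T + t) = RInt g 0 t).
  { rewrite <- (RInt_ext (fun x => g (x + T)) g 0 t) by auto. rewrite Htranslate. f_equal; ring. }
  rewrite Hwrap.
  rewrite <- (RInt_Chasles g 0 t T) by apply Ex.
  unfold plus; simpl. ring.
Qed.

Lemma sph_periodic phi theta : sph phi (theta + 2 * PI) = sph phi theta.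
Proof. unfold sph. rewrite cos_plus, sin_plus, cos_2PI, sin_2PI. f_equal; ring. Qed.

Lemma is_RInt_mono_parallel e phi :
  is_RInt (fun theta => sin phi * mono e (sph phi theta)) 0 (2 * PI) (parallel_moment e phi).
Proof.
  destruct e as [[a b] c]. simpl.
  apply (is_RInt_ext (fun t => (sin phi ^ (a + b + 1) * cos phi ^ c) * (sin t ^ b * cos t ^ a))).
  { intros t _. rewrite !Rpow_mult_distr, !pow_add. simpl. ring. }
  rewrite (Rmult_comm (sc_int _ _ _ _)).
  apply (is_RInt_scal (V := R_NormedModule)), is_RInt_sc_int.
Qed.

Lemma is_RInt_mono_parallel_shift e phi t :
  is_RInt (fun theta => sin phi * mono e (sph phi (theta + t))) 0 (2 * PI) (parallel_moment e phi).
Proof.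
  set (g := fun theta => sin phi * mono e (sph phi theta)).
  assert (Hg : forall x, continuous g x).
  { intro x. apply continuous_of_ex_derive. unfold g, mono, sph. destruct e as [[a b] c].
    simpl. auto_derive. auto. }
  replace (parallel_moment e phi) with (RInt (fun theta => g (theta + t)) 0 (2 * PI)).
  - apply (RInt_correct (V := R_CompleteNormedModule)), (ex_RInt_continuous (V := R_CompleteNormedModule)).
    intros x _. apply (continuous_comp (fun x => x + t) g); [|apply Hg].
    apply continuous_of_ex_derive. auto_derive. auto.
  - rewrite RInt_periodic_shift by (auto; intro; unfold g; rewrite sph_periodic; reflexivity).
    apply is_RInt_unique, is_RInt_mono_parallel.
Qed.

Lemma is_RInt_parallel_moment e : is_RInt (parallel_moment e) 0 PI (moment e).
Proof. destruct e as [[a b] c]. apply (is_RInt_scal (V := R_NormedModule)), is_RInt_sc_int. Qed.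

Lemma sphere_int_peval_shift l t :
  RInt (V := C_R_CompleteNormedModule) (fun phi => RInt (V := C_R_CompleteNormedModule)
    (fun theta => Cmult (RtoC (sin phi)) (peval l (sph phi (theta + t)))) 0 (2 * PI)) 0 PI
  = lincomb l moment.
Proof.
  rewrite (RInt_ext_C _ (fun phi => lincomb l (fun e => parallel_moment e phi))).
  - apply is_RInt_unique_C, is_RInt_lincomb, is_RInt_parallel_moment.
  - intros phi _. apply is_RInt_unique_C.
    apply (is_RInt_ext (fun theta => lincomb l (fun e => sin phi * mono e (sph phi (theta + t))))).
    + intros theta _. unfold peval. rewrite lincomb_scale_R. reflexivity.
    + apply is_RInt_lincomb. intro e. apply is_RInt_mono_parallel_shift.
Qed.

Lemma on_sphere_sph phi theta : on_sphere (sph phi theta).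
Proof.
  unfold on_sphere, dot, sph; simpl. pose proof (sin2_cos2 phi). pose proof (sin2_cos2 theta).
  unfold Rsqr in *. nra.
Qed.

Lemma sphere_int_ext f g : (forall z, on_sphere z -> f z = g z) -> sphere_int f = sphere_int g.
Proof.
  intro H. unfold sphere_int. apply RInt_ext_C. intros. apply RInt_ext_C. intros.
  rewrite H by apply on_sphere_sph. reflexivity.
Qed.

Lemma sphere_int_peval l : sphere_int (peval l) = lincomb l moment.
Proof.
  rewrite <- (sphere_int_peval_shift l 0). unfold sphere_int.
  apply RInt_ext_C. intros. apply RInt_ext_C. intros. rewrite Rplus_0_r. reflexivity.
Qed.

Definition is_poly (f : vec3 -> C) : Prop := exists l, forall z, f z = peval l z.

Lemma sphere_int_scal c f : is_poly f -> sphere_int (fun z => Cmult c (f z)) = Cmult c (sphere_int f).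
Proof.
  intros [l H].
  rewrite (sphere_int_ext f (peval l)), (sphere_int_ext _ (peval (map (fun p => (Cmult c (fst p), snd p)) l)))
    by (intros z _; rewrite ?H; unfold peval; rewrite ?lincomb_scale_coef; reflexivity).
  rewrite !sphere_int_peval. apply lincomb_scale_coef.
Qed.

(** * Rotation invariance of the sphere integral *)

Definition rz (t : R) (z : vec3) : vec3 :=
  mkv (cos t * v1 z - sin t * v2 z) (sin t * v1 z + cos t * v2 z) (v3 z).

Definition rx (t : R) (z : vec3) : vec3 :=
  mkv (v1 z) (cos t * v2 z - sin t * v3 z) (sin t * v2 z + cos t * v3 z).

Definition cyc (z : vec3) : vec3 := mkv (v2 z) (v3 z) (v1 z).

Lemma rz_sph t phi theta : rz t (sph phi theta) = sph phi (theta + t).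
Proof. unfold rz, sph; simpl. rewrite cos_plus, sin_plus. f_equal; ring. Qed.

Lemma sphere_int_rz f t : is_poly f -> sphere_int (fun z => f (rz t z)) = sphere_int f.
Proof.
  intros [l H]. rewrite (sphere_int_ext f (peval l)) by auto.
  rewrite sphere_int_peval, <- (sphere_int_peval_shift l t). unfold sphere_int.
  apply RInt_ext_C. intros. apply RInt_ext_C. intros. rewrite H, rz_sph. reflexivity.
Qed.

Definition monomial_cyc (e : monomial) : monomial := let '(a, b, c) := e in (c, a, b).

Lemma sphere_int_cyc f : is_poly f -> sphere_int (fun z => f (cyc z)) = sphere_int f.
Proof.
  intros [l H].
  rewrite (sphere_int_ext f (peval l)),
    (sphere_int_ext _ (peval (map (fun p => (fst p, monomial_cyc (snd p))) l)))
    by (intros z _; rewrite ?H; unfold peval; rewrite ?lincomb_map_monomial; try reflexivity;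
        apply lincomb_ext; intros [[a b] c]; simpl; ring).
  rewrite !sphere_int_peval, lincomb_map_monomial. apply lincomb_ext.
  intros [[a b] c]. symmetry. apply sphere_moment_cycle.
Qed.

Lemma is_poly_ext f g : (forall z, f z = g z) -> is_poly f -> is_poly g.
Proof. intros H [l Hl]. exists l. intro z. rewrite <- H. apply Hl. Qed.

Lemma is_poly_const (c : C) : is_poly (fun _ => c).
Proof. exists ((c, (0, 0, 0)%nat) :: nil). intro z. unfold peval. simpl. C_ring. Qed.

Lemma is_poly_v1 : is_poly (fun z => RtoC (v1 z)).
Proof. exists ((RtoC 1, (1, 0, 0)%nat) :: nil). intro z. unfold peval. simpl. C_ring. Qed.

Lemma is_poly_v2 : is_poly (fun z => RtoC (v2 z)).
Proof. exists ((RtoC 1, (0, 1, 0)%nat) :: nil). intro z. unfold peval. simpl. C_ring. Qed.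

Lemma is_poly_v3 : is_poly (fun z => RtoC (v3 z)).
Proof. exists ((RtoC 1, (0, 0, 1)%nat) :: nil). intro z. unfold peval. simpl. C_ring. Qed.

Lemma lincomb_app l1 l2 F : lincomb (l1 ++ l2) F = Cplus (lincomb l1 F) (lincomb l2 F).
Proof. induction l1 as [|[c e] l IH]; simpl; rewrite ?IH; ring. Qed.

Lemma is_poly_plus f g : is_poly f -> is_poly g -> is_poly (fun z => Cplus (f z) (g z)).
Proof.
  intros [l1 H1] [l2 H2]. exists (l1 ++ l2). intro z. unfold peval. rewrite lincomb_app, H1, H2. reflexivity.
Qed.

Definition monomial_mul (e1 e2 : monomial) : monomial :=
  let '(a, b, c) := e1 in let '(a', b', c') := e2 in (a + a', b + b', c + c')%nat.

Lemma mono_mul e1 e2 z : mono (monomial_mul e1 e2) z = mono e1 z * mono e2 z.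
Proof. destruct e1 as [[a b] c], e2 as [[a' b'] c']. simpl. rewrite !pow_add. ring. Qed.

Fixpoint poly3_mul (l1 l2 : poly3) : poly3 :=
  match l1 with
  | nil => nil
  | (c, e) :: l => map (fun p => (Cmult c (fst p), monomial_mul e (snd p))) l2 ++ poly3_mul l l2
  end.

Lemma peval_mul l1 l2 z : peval (poly3_mul l1 l2) z = Cmult (peval l1 z) (peval l2 z).
Proof.
  unfold peval. induction l1 as [|[c e] l IH]; cbn [poly3_mul lincomb]; [C_ring|].
  rewrite lincomb_app, IH, Cmult_plus_distr_r. f_equal. clear IH.
  induction l2 as [|[d e'] l2 IH2]; cbn [map lincomb fst snd]; [C_ring|].
  rewrite IH2, mono_mul, RtoC_mult. ring.
Qed.

Lemma is_poly_mult f g : is_poly f -> is_poly g -> is_poly (fun z => Cmult (f z) (g z)).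
Proof.
  intros [l1 H1] [l2 H2]. exists (poly3_mul l1 l2). intro z. rewrite peval_mul, H1, H2. reflexivity.
Qed.

Lemma is_poly_pow f n : is_poly f -> is_poly (fun z => Cpow (f z) n).
Proof. intro H. induction n; simpl; [apply is_poly_const | apply is_poly_mult; auto]. Qed.

Lemma is_poly_conj f : is_poly f -> is_poly (fun z => Cconj (f z)).
Proof.
  intros [l H]. exists (map (fun p => (Cconj (fst p), snd p)) l). intro z. rewrite H. clear H.
  unfold peval. induction l as [|[c e] l IH]; simpl.
  - C_ring.
  - rewrite <- IH, Cplus_conj, Cmult_conj. f_equal. f_equal. apply injective_projections; simpl; ring.
Qed.

Lemma is_poly_dot u : is_poly (fun z => RtoC (dot u z)).
Proof.
  apply (is_poly_ext (fun z => Cplus (Cplus (Cmult (RtoC (v1 u)) (RtoC (v1 z)))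
    (Cmult (RtoC (v2 u)) (RtoC (v2 z)))) (Cmult (RtoC (v3 u)) (RtoC (v3 z))))).
  { intro z. unfold dot. rewrite !RtoC_plus, !RtoC_mult. reflexivity. }
  repeat apply is_poly_plus; apply is_poly_mult; auto using is_poly_const, is_poly_v1, is_poly_v2, is_poly_v3.
Qed.

Lemma is_poly_mapply f M : is_poly f -> is_poly (fun z => f (mapply M z)).
Proof.
  intros [l H]. apply (is_poly_ext (fun z => peval l (mapply M z))); [intro; symmetry; apply H|].
  clear H. unfold peval. induction l as [|[c [[a b] d]] l IH]; simpl; [apply is_poly_const|].
  apply is_poly_plus; auto. apply is_poly_mult; [apply is_poly_const|].
  apply (is_poly_ext (fun z => Cmult (Cmult (Cpow (RtoC (dot (r1 M) z)) a) (Cpow (RtoC (dot (r2 M) z)) b))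
                                   (Cpow (RtoC (dot (r3 M) z)) d))).
  { intro z. rewrite <- !RtoC_pow, <- !RtoC_mult. reflexivity. }
  repeat apply is_poly_mult; apply is_poly_pow, is_poly_dot.
Qed.

Lemma is_poly_linear f (L : vec3 -> vec3) M :
  (forall z, L z = mapply M z) -> is_poly f -> is_poly (fun z => f (L z)).
Proof.
  intros HL Hf. apply (is_poly_ext (fun z => f (mapply M z))); [intro; rewrite HL; auto|].
  apply is_poly_mapply, Hf.
Qed.

Lemma is_poly_rz f t : is_poly f -> is_poly (fun z => f (rz t z)).
Proof.
  apply is_poly_linear with (mkm (mkv (cos t) (- sin t) 0) (mkv (sin t) (cos t) 0) (mkv 0 0 1)).
  intros [z1 z2 z3]. unfold rz, mapply, dot; simpl. f_equal; ring.
Qed.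

Lemma is_poly_rx f t : is_poly f -> is_poly (fun z => f (rx t z)).
Proof.
  apply is_poly_linear with (mkm (mkv 1 0 0) (mkv 0 (cos t) (- sin t)) (mkv 0 (sin t) (cos t))).
  intros [z1 z2 z3]. unfold rx, mapply, dot; simpl. f_equal; ring.
Qed.

Definition cyc_inv (z : vec3) : vec3 := mkv (v3 z) (v1 z) (v2 z).

Lemma is_poly_cyc_inv f : is_poly f -> is_poly (fun z => f (cyc_inv z)).
Proof.
  apply is_poly_linear with (mkm (mkv 0 0 1) (mkv 1 0 0) (mkv 0 1 0)).
  intros [z1 z2 z3]. unfold cyc_inv, mapply, dot; simpl. f_equal; ring.
Qed.

Lemma sphere_int_cyc_inv f : is_poly f -> sphere_int (fun z => f (cyc_inv z)) = sphere_int f.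
Proof.
  intro Hf. rewrite <- (sphere_int_cyc (fun z => f (cyc_inv z))) by (apply is_poly_cyc_inv; auto).
  apply sphere_int_ext. intros [z1 z2 z3] _. reflexivity.
Qed.

(* [rx t] is [rz t] conjugated by the cyclic permutation of coordinates. *)
Lemma sphere_int_rx f t : is_poly f -> sphere_int (fun z => f (rx t z)) = sphere_int f.
Proof.
  intro Hf.
  transitivity (sphere_int (fun z => f (cyc_inv (rz t (cyc z))))).
  { apply sphere_int_ext. intros [z1 z2 z3] _. reflexivity. }
  rewrite (sphere_int_cyc (fun z => f (cyc_inv (rz t z))))
    by apply (is_poly_rz (fun z => f (cyc_inv z))), is_poly_cyc_inv, Hf.
  rewrite (sphere_int_rz (fun z => f (cyc_inv z))) by apply is_poly_cyc_inv, Hf.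
  apply sphere_int_cyc_inv, Hf.
Qed.

Lemma sum_sq3_eq0 x y z : x * x + y * y + z * z = 0 -> x = 0 /\ y = 0 /\ z = 0.
Proof. intros. repeat split; nra. Qed.

Lemma exists_angle x y : x * x + y * y = 1 -> exists t, -PI <= t <= PI /\ cos t = x /\ sin t = y.
Proof.
  intro H. assert (Hx : -1 <= x <= 1) by nra.
  assert (Hs : sqrt (1 - x²) = Rabs y) by (rewrite <- sqrt_Rsqr_abs; f_equal; unfold Rsqr; lra).
  pose proof (acos_bound x) as Hb. pose proof PI_RGT_0.
  destruct (Rle_dec 0 y).
  - exists (acos x). rewrite cos_acos, sin_acos by auto. rewrite Hs, Rabs_right; lra.
  - exists (- acos x). rewrite cos_neg, sin_neg, cos_acos, sin_acos by auto. rewrite Hs, Rabs_left; lra.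
Qed.

Definition euler_form (M : mat3) : Prop :=
  exists al be ga, forall z, mapply M z = rz al (rx be (rz ga z)).

Section SO3Entries.
Variables a b c d e f g h i : R.
Hypothesis N1 : a*a + b*b + c*c = 1.
Hypothesis N2 : d*d + e*e + f*f = 1.
Hypothesis N3 : g*g + h*h + i*i = 1.
Hypothesis O12 : a*d + b*e + c*f = 0.
Hypothesis O13 : a*g + b*h + c*i = 0.
Hypothesis O23 : d*g + e*h + f*i = 0.
Hypothesis Det : a*(e*i - f*h) + b*(f*g - d*i) + c*(d*h - e*g) = 1.

Local Notation M := (mkm (mkv a b c) (mkv d e f) (mkv g h i)).

(* Each row is the cross product of the next two: both are unit vectors whose scalar product is
   [det = 1], so their difference has norm [0]. *)
Lemma so3_row1 : a = e*i - f*h /\ b = f*g - d*i /\ c = d*h - e*g.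
Proof.
  assert (Z : (a - (e*i - f*h))*(a - (e*i - f*h)) + (b - (f*g - d*i))*(b - (f*g - d*i))
              + (c - (d*h - e*g))*(c - (d*h - e*g)) = 0).
  { transitivity ((a*a+b*b+c*c) - 2 * (a*(e*i - f*h) + b*(f*g - d*i) + c*(d*h - e*g))
      + ((d*d+e*e+f*f)*(g*g+h*h+i*i) - (d*g+e*h+f*i)*(d*g+e*h+f*i))); [ring|].
    rewrite N1, N2, N3, O23, Det. ring. }
  apply sum_sq3_eq0 in Z. lra.
Qed.

Lemma so3_row2 : d = h*c - i*b /\ e = i*a - g*c /\ f = g*b - h*a.
Proof.
  assert (Z : (d - (h*c - i*b))*(d - (h*c - i*b)) + (e - (i*a - g*c))*(e - (i*a - g*c))
              + (f - (g*b - h*a))*(f - (g*b - h*a)) = 0).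
  { transitivity ((d*d+e*e+f*f) - 2 * (a*(e*i - f*h) + b*(f*g - d*i) + c*(d*h - e*g))
      + ((g*g+h*h+i*i)*(a*a+b*b+c*c) - (a*g+b*h+c*i)*(a*g+b*h+c*i))); [ring|].
    rewrite N1, N2, N3, O13, Det. ring. }
  apply sum_sq3_eq0 in Z. lra.
Qed.

Lemma so3_row3 : g = b*f - c*e /\ h = c*d - a*f /\ i = a*e - b*d.
Proof.
  assert (Z : (g - (b*f - c*e))*(g - (b*f - c*e)) + (h - (c*d - a*f))*(h - (c*d - a*f))
              + (i - (a*e - b*d))*(i - (a*e - b*d)) = 0).
  { transitivity ((g*g+h*h+i*i) - 2 * (a*(e*i - f*h) + b*(f*g - d*i) + c*(d*h - e*g))
      + ((a*a+b*b+c*c)*(d*d+e*e+f*f) - (a*d+b*e+c*f)*(a*d+b*e+c*f))); [ring|].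
    rewrite N1, N2, N3, O12, Det. ring. }
  apply sum_sq3_eq0 in Z. lra.
Qed.

Lemma so3_columns : a*a + d*d + g*g = 1 /\ b*b + e*e + h*h = 1 /\ c*c + f*f + i*i = 1 /\
  a*b + d*e + g*h = 0 /\ a*c + d*f + g*i = 0 /\ b*c + e*f + h*i = 0.
Proof.
  destruct so3_row1 as [Ha [Hb Hc]], so3_row2 as [Hd [He Hf]], so3_row3 as [Hg [Hh Hi]].
  repeat split.
  - rewrite <- Det. rewrite Ha at 1. rewrite Hd at 1. rewrite Hg at 1. ring.
  - rewrite <- Det. rewrite Hb at 1. rewrite He at 1. rewrite Hh at 1. ring.
  - rewrite <- Det. rewrite Hc at 1. rewrite Hf at 1. rewrite Hi at 1. ring.
  - rewrite Ha at 1. rewrite Hd at 1. rewrite Hg at 1. ring.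
  - rewrite Ha at 1. rewrite Hd at 1. rewrite Hg at 1. ring.
  - rewrite Hb at 1. rewrite He at 1. rewrite Hh at 1. ring.
Qed.

Lemma so3_upper_block :
  a * (g*g + h*h) = - f*h - c*i*g /\ b * (g*g + h*h) = f*g - c*i*h /\
  d * (g*g + h*h) = c*h - f*i*g /\ e * (g*g + h*h) = - c*g - f*i*h.
Proof.
  destruct so3_columns as [_ [_ [C3 [_ [_ C23]]]]].
  destruct so3_row1 as [_ [_ Hc]], so3_row2 as [_ [_ Hf]], so3_row3 as [Hg _].
  repeat split.
  - replace (c * i) with (- a * g - b * h) by lra. rewrite Hf. ring.
  - replace (g * g + h * h) with (c * c + f * f) by lra.
    replace (c * i * h) with (c * (h * i)) by ring. replace (h * i) with (- b * c - e * f) by lra.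
    rewrite Hg. ring.
  - replace (f * i) with (- d * g - e * h) by lra. rewrite Hc. ring.
  - replace (f * i) with (- d * g - e * h) by lra. rewrite Hc. ring.
Qed.

Lemma euler_pole : g = 0 -> h = 0 -> euler_form M.
Proof.
  intros Hg Hh.
  destruct so3_columns as [C1 [_ [C3 _]]].
  destruct so3_row1 as [_ [Hb _]], so3_row2 as [_ [He _]].
  assert (Hcf : c * c + f * f + 0 * 0 = 0) by (rewrite Hg, Hh in N3; lra).
  apply sum_sq3_eq0 in Hcf as [Hc [Hf _]].
  assert (Hi : -1 <= i <= 1) by (clear - N3; nra).
  assert (Hsb : sin (acos i) = 0).
  { rewrite sin_acos by auto. replace (1 - i²) with 0 by (unfold Rsqr; rewrite Hg, Hh in N3; lra).
    apply sqrt_0. }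
  destruct (exists_angle a d) as [al [_ [Ha Hd]]]; [rewrite Hg in C1; lra|].
  exists al, (acos i), 0. intros [z1 z2 z3].
  unfold mapply, rz, rx, dot; simpl. rewrite cos_0, sin_0, cos_acos, Hsb, Ha, Hd by auto.
  rewrite Hb, He, Hc, Hf, Hg, Hh. f_equal; ring.
Qed.

Lemma euler_generic : 0 < g * g + h * h -> euler_form M.
Proof.
  intro Hpos. set (s := sqrt (g * g + h * h)).
  assert (Hs : 0 < s) by (apply sqrt_lt_R0; lra).
  assert (Hss : s * s = g * g + h * h) by (apply sqrt_sqrt; lra).
  destruct so3_columns as [_ [_ [C3 _]]].
  assert (Hi1 : -1 <= i <= 1) by (clear - N3; nra).
  assert (Hsb : sin (acos i) = s).
  { rewrite sin_acos by auto. unfold s. f_equal. unfold Rsqr. lra. }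
  destruct (exists_angle (- f / s) (c / s)) as [al [_ [cal sal]]].
  { replace (- f / s * (- f / s) + c / s * (c / s)) with ((c * c + f * f) / (s * s)) by (field; lra).
    replace (c * c + f * f) with (s * s) by lra. field. lra. }
  destruct (exists_angle (h / s) (g / s)) as [ga [_ [cga sga]]].
  { replace (h / s * (h / s) + g / s * (g / s)) with ((g * g + h * h) / (s * s)) by (field; lra).
    rewrite Hss. field. lra. }
  destruct so3_upper_block as [E11 [E12 [E21 E22]]]. rewrite <- Hss in E11, E12, E21, E22.
  exists al, (acos i), ga. intros [z1 z2 z3].
  unfold mapply, rz, rx, dot; simpl. rewrite cos_acos, Hsb, cal, sal, cga, sga by auto.
  assert (Hs2 : s * s <> 0) by nra.
  f_equal.
  - apply (Rmult_eq_reg_r (s * s)); [|exact Hs2].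
    transitivity (a * (s * s) * z1 + b * (s * s) * z2 + c * (s * s) * z3); [ring|].
    rewrite E11, E12. field. lra.
  - apply (Rmult_eq_reg_r (s * s)); [|exact Hs2].
    transitivity (d * (s * s) * z1 + e * (s * s) * z2 + f * (s * s) * z3); [ring|].
    rewrite E21, E22. field. lra.
  - field. lra.
Qed.

End SO3Entries.

Lemma SO3_entries M : SO3 M ->
  let '(mkm (mkv a b c) (mkv d e f) (mkv g h i)) := M in
  a*a + b*b + c*c = 1 /\ d*d + e*e + f*f = 1 /\ g*g + h*h + i*i = 1 /\
  a*d + b*e + c*f = 0 /\ a*g + b*h + c*i = 0 /\ d*g + e*h + f*i = 0 /\
  a*(e*i - f*h) + b*(f*g - d*i) + c*(d*h - e*g) = 1.
Proof.
  destruct M as [[a b c] [d e f] [g h i]]. unfold SO3, det3, cross, dot; simpl. tauto.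
Qed.

Lemma SO3_euler M : SO3 M -> euler_form M.
Proof.
  intro HM. apply SO3_entries in HM. destruct M as [[a b c] [d e f] [g h i]].
  destruct HM as [N1 [N2 [N3 [O12 [O13 [O23 Det]]]]]].
  destruct (Req_dec (g * g + h * h) 0) as [H0 | H0].
  - apply euler_pole; auto; clear - H0; nra.
  - apply euler_generic; auto. clear - H0. nra.
Qed.

Lemma SO3_dot M u v : SO3 M -> dot (mapply M u) (mapply M v) = dot u v.
Proof.
  intro HM. apply SO3_entries in HM. destruct M as [[a b c] [d e f] [g h i]].
  destruct HM as [N1 [N2 [N3 [O12 [O13 [O23 Det]]]]]].
  destruct (so3_columns a b c d e f g h i) as [C1 [C2 [C3 [C12 [C13 C23]]]]]; auto.
  destruct u as [u1 u2 u3], v as [w1 w2 w3]. unfold mapply, dot; simpl.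
  transitivity (u1*w1*(a*a + d*d + g*g) + u2*w2*(b*b + e*e + h*h) + u3*w3*(c*c + f*f + i*i)
     + (u1*w2 + u2*w1)*(a*b + d*e + g*h) + (u1*w3 + u3*w1)*(a*c + d*f + g*i)
     + (u2*w3 + u3*w2)*(b*c + e*f + h*i)); [ring|].
  rewrite C1, C2, C3, C12, C13, C23. ring.
Qed.

Lemma on_sphere_mapply M y : SO3 M -> on_sphere y -> on_sphere (mapply M y).
Proof. intros HM Hy. unfold on_sphere. rewrite SO3_dot; auto. Qed.

Lemma sphere_int_SO3 f M : is_poly f -> SO3 M -> sphere_int (fun z => f (mapply M z)) = sphere_int f.
Proof.
  intros Hf HM. destruct (SO3_euler M HM) as [al [be [ga HE]]].
  transitivity (sphere_int (fun z => f (rz al (rx be (rz ga z))))).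
  { apply sphere_int_ext. intros z _. rewrite HE. reflexivity. }
  rewrite (sphere_int_rz (fun z => f (rz al (rx be z))))
    by apply (is_poly_rx (fun z => f (rz al z))), is_poly_rz, Hf.
  rewrite (sphere_int_rx (fun z => f (rz al z))) by apply is_poly_rz, Hf.
  apply sphere_int_rz, Hf.
Qed.

(** * The diagonal associated Legendre function *)

(* Real polynomials as coefficient lists, lowest degree first. *)
Fixpoint horner (l : list R) (x : R) : R :=
  match l with nil => 0 | a :: l' => a + x * horner l' x end.

Fixpoint deriv_from (m : nat) (l : list R) : list R :=
  match l with nil => nil | b :: l' => (INR m * b) :: deriv_from (S m) l' end.

Definition deriv_coefs (l : list R) : list R :=
  match l with nil => nil | _ :: l' => deriv_from 1 l' end.

Lemma is_derive_deriv_from l : forall m x,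
  is_derive (fun y => y ^ S m * horner l y) x (x ^ m * horner (deriv_from (S m) l) x).
Proof.
  induction l as [|b l IH]; intros m x; cbn [horner deriv_from].
  - apply (is_derive_ext (fun _ => 0)); [intro; simpl; ring|].
    rewrite Rmult_0_r. auto_derive; auto.
  - apply (is_derive_ext (fun y => b * y ^ S m + y ^ S (S m) * horner l y)); [intro; simpl; ring|].
    replace (x ^ m * (INR (S m) * b + x * horner (deriv_from (S (S m)) l) x))
      with (b * (INR (S m) * x ^ m) + x ^ S m * horner (deriv_from (S (S m)) l) x) by (simpl; ring).
    apply (is_derive_plus (V := R_NormedModule) (fun y => b * y ^ S m)); [|apply IH].
    auto_derive; auto. simpl. ring.
Qed.

Lemma is_derive_horner l x : is_derive (horner l) x (horner (deriv_coefs l) x).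
Proof.
  destruct l as [|a l]; simpl.
  - (auto_derive; auto).
  - apply (is_derive_ext (fun y => a + y ^ 1 * horner l y)); [intro; simpl; ring|].
    replace (horner (deriv_from 1 l) x) with (0 + x ^ 0 * horner (deriv_from 1 l) x) by (simpl; ring).
    apply (is_derive_plus (V := R_NormedModule) (fun _ => a)); [auto_derive; auto | apply is_derive_deriv_from].
Qed.

Lemma Derive_n_horner l n x : Derive_n (horner l) n x = horner (Nat.iter n deriv_coefs l) x.
Proof.
  revert x. induction n as [|n IH]; intro x; simpl; [reflexivity|].
  rewrite (Derive_ext _ (horner (Nat.iter n deriv_coefs l))) by auto.
  apply is_derive_unique, is_derive_horner.
Qed.

Lemma length_deriv_from m l : length (deriv_from m l) = length l.
Proof. revert m; induction l; intro m; simpl; auto. Qed.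

Lemma last_deriv_from l : forall m, l <> nil ->
  last (deriv_from m l) 0 = INR (m + length l - 1) * last l 0.
Proof.
  induction l as [|b l IH]; intros m H; [contradiction|].
  destruct l as [|b' l'].
  - simpl. do 2 f_equal. lia.
  - change (last (deriv_from (S m) (b' :: l')) 0 = INR (m + length (b :: b' :: l') - 1) * last (b' :: l') 0).
    rewrite IH by discriminate. do 2 f_equal. simpl. lia.
Qed.

Lemma iter_deriv_coefs_top n : forall l, length l = S n ->
  Nat.iter n deriv_coefs l = (INR (fact n) * last l 0) :: nil.
Proof.
  induction n as [|n IH]; intros l Hl.
  - destruct l as [|a [|b l]]; simpl in *; try lia. f_equal. ring.
  - rewrite Nat.iter_succ_r. destruct l as [|a [|b l]]; simpl in Hl; try lia.
    rewrite IH by (simpl; rewrite length_deriv_from; lia).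
    change (deriv_coefs (a :: b :: l)) with (deriv_from 1 (b :: l)).
    rewrite last_deriv_from by discriminate.
    change (last (a :: b :: l) 0) with (last (b :: l) 0).
    replace (1 + length (b :: l) - 1)%nat with (S n) by (simpl; lia).
    rewrite fact_simpl, mult_INR. f_equal. ring.
Qed.

Fixpoint coefs_add (l m : list R) : list R :=
  match l, m with nil, _ => m | _, nil => l | a :: l', b :: m' => (a + b) :: coefs_add l' m' end.

Definition coefs_mul_x2m1 (l : list R) : list R := coefs_add (0 :: 0 :: l) (map Ropp l).

Lemma horner_coefs_add l m x : horner (coefs_add l m) x = horner l x + horner m x.
Proof. revert m; induction l as [|a l IH]; intros [|b m]; simpl; rewrite ?IH; ring. Qed.

Lemma horner_coefs_mul_x2m1 l x : horner (coefs_mul_x2m1 l) x = (x ^ 2 - 1) * horner l x.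
Proof.
  unfold coefs_mul_x2m1. rewrite horner_coefs_add.
  assert (Hopp : horner (map Ropp l) x = - horner l x) by (induction l; simpl; rewrite ?IHl; ring).
  rewrite Hopp. simpl. ring.
Qed.

Lemma coefs_add_shorter l m : (length m < length l)%nat ->
  length (coefs_add l m) = length l /\ last (coefs_add l m) 0 = last l 0.
Proof.
  revert m. induction l as [|a l IH]; intros m H; simpl in H; [lia|].
  destruct m as [|b m]; [destruct l; simpl; auto|].
  simpl in H. destruct (IH m) as [H1 H2]; [lia|].
  destruct l as [|a' l']; [simpl in H; lia|].
  change (coefs_add (a :: a' :: l') (b :: m)) with ((a + b) :: coefs_add (a' :: l') m).
  split; [cbn [length]; rewrite H1; reflexivity|].
  destruct (coefs_add (a' :: l') m) as [|r0 l0] eqn:E; [simpl in H1; lia|].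
  exact H2.
Qed.

Definition x2m1_pow_coefs (k : nat) : list R := Nat.iter k coefs_mul_x2m1 (1 :: nil).

Lemma x2m1_pow_coefs_spec k :
  length (x2m1_pow_coefs k) = S (2 * k) /\ last (x2m1_pow_coefs k) 0 = 1 /\
  forall x, horner (x2m1_pow_coefs k) x = (x ^ 2 - 1) ^ k.
Proof.
  induction k as [|k [Hl [Hla He]]]; [simpl; repeat split; intro; ring|].
  unfold x2m1_pow_coefs in *. rewrite Nat.iter_succ.
  destruct (coefs_add_shorter (0 :: 0 :: Nat.iter k coefs_mul_x2m1 (1 :: nil))
              (map Ropp (Nat.iter k coefs_mul_x2m1 (1 :: nil)))) as [H1 H2].
  { rewrite length_map. simpl. lia. }
  fold (coefs_mul_x2m1 (Nat.iter k coefs_mul_x2m1 (1 :: nil))) in H1, H2.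
  repeat split.
  - rewrite H1. simpl. lia.
  - rewrite H2. destruct (Nat.iter k coefs_mul_x2m1 (1 :: nil)); [simpl in Hl; lia | exact Hla].
  - intro x. rewrite horner_coefs_mul_x2m1, He. reflexivity.
Qed.

Definition legendre_lead (k : nat) : R := / (2 ^ k * INR (fact k)) * INR (fact (2 * k)).

Lemma legendre_lead_neq0 k : legendre_lead k <> 0.
Proof.
  unfold legendre_lead. pose proof (fact_neq_0 k). pose proof (fact_neq_0 (2 * k)).
  apply Rmult_integral_contrapositive_currified;
    [apply Rinv_neq_0_compat, Rmult_integral_contrapositive_currified|];
    auto using pow_nonzero, not_0_INR with real.
Qed.

Lemma Derive_n_Legendre_diag k x : Derive_n (Legendre k) k x = legendre_lead k.
Proof.
  destruct (x2m1_pow_coefs_spec k) as [Hl [Hla He]].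
  unfold Legendre. rewrite Derive_n_scal_l, Derive_n_comp.
  rewrite (Derive_n_ext _ (horner (x2m1_pow_coefs k))) by (intro; symmetry; apply He).
  rewrite Derive_n_horner, iter_deriv_coefs_top by (rewrite Hl; f_equal; lia).
  simpl. rewrite Hla. unfold legendre_lead. replace (k + k)%nat with (2 * k)%nat by lia. ring.
Qed.

Lemma assocLegendre_diag_cos k phi : 0 <= phi <= PI ->
  assocLegendre k k (cos phi) = (-1) ^ k * legendre_lead k * sin phi ^ k.
Proof.
  intro Hp. unfold assocLegendre. rewrite Derive_n_Legendre_diag.
  replace (1 - cos phi ^ 2) with (sin phi ^ 2) by (pose proof (sin2_cos2 phi); unfold Rsqr in *; simpl; lra).
  rewrite sqrt_pow2 by (apply sin_ge_0; lra). ring.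
Qed.

(** * The polynomial [(x + i y)^k] *)

Lemma cis_add x y : Cmult (cis x) (cis y) = cis (x + y).
Proof. unfold cis. rewrite cos_plus, sin_plus. C_ring. Qed.

Lemma cis_pow x n : Cpow (cis x) n = cis (INR n * x).
Proof.
  induction n as [|n IH]; simpl Cpow.
  - unfold cis. rewrite Rmult_0_l, cos_0, sin_0. reflexivity.
  - rewrite IH, cis_add, S_INR. f_equal. ring.
Qed.

Lemma cis_conj t : Cconj (cis t) = cis (- t).
Proof. unfold cis, Cconj. rewrite cos_neg, sin_neg. reflexivity. Qed.

Lemma cis_neq0 t : cis t <> RtoC 0.
Proof.
  intro E. unfold cis in E. injection E as E1 E2. pose proof (sin2_cos2 t) as H.
  unfold Rsqr in H. rewrite E1, E2 in H. lra.
Qed.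

Definition beam (k : nat) (z : vec3) : C := Cpow (v1 z, v2 z) k.

Lemma beam_sph k phi theta : beam k (sph phi theta) = Cmult (RtoC (sin phi ^ k)) (cis (INR k * theta)).
Proof. unfold beam, sph; simpl. rewrite <- cis_pow, RtoC_pow, <- Cpow_mult_l. f_equal. unfold cis. C_ring. Qed.

Lemma beam_rz k t u : beam k (rz t u) = Cmult (cis (INR k * t)) (beam k u).
Proof. unfold beam, rz; simpl. rewrite <- cis_pow, <- Cpow_mult_l. f_equal. unfold cis. C_ring. Qed.

Lemma beam_neq0 k u : v1 u * v1 u + v2 u * v2 u = 1 -> beam k u <> RtoC 0.
Proof. intro H. apply Cpow_nz. intro E. injection E as E1 E2. rewrite E1, E2 in H. lra. Qed.

Lemma is_poly_beam k : is_poly (beam k).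
Proof.
  apply (is_poly_ext (fun z => Cpow (Cplus (RtoC (v1 z)) (Cmult (0, 1) (RtoC (v2 z)))) k)).
  { intro z. unfold beam. f_equal. C_ring. }
  apply is_poly_pow, is_poly_plus, is_poly_mult; auto using is_poly_v1, is_poly_const, is_poly_v2.
Qed.

Fixpoint cpoly_eval (l : list C) (w : C) : C :=
  match l with nil => RtoC 0 | a :: l' => Cplus a (Cmult w (cpoly_eval l' w)) end.

Lemma is_RInt_cis_pow n : is_RInt_C (fun t => Cpow (cis t) (S n)) 0 (2 * PI) (RtoC 0).
Proof.
  apply (is_RInt_C_ext (fun t => cis (INR (S n) * t))); [intro; symmetry; apply cis_pow|].
  assert (Hm : 0 < INR (S n)) by apply lt_0_INR, Nat.lt_0_succ.
  set (m := INR (S n)) in *.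
  assert (Hperiod : m * (2 * PI) = 0 + 2 * INR (S n) * PI) by (unfold m; ring).
  apply is_RInt_C_intro; simpl.
  - pose proof (is_RInt_antiderivative (fun t => sin (m * t) / m) (fun t => cos (m * t)) 0 (2 * PI)) as H.
    cbv beta in H. rewrite Hperiod, sin_period, Rmult_0_r, sin_0 in H.
    replace (0 / m - 0 / m) with 0 in H by (field; lra).
    apply H.
    + intros. auto_derive; auto. field. lra.
    + intros. apply continuous_of_ex_derive. auto_derive. auto.
  - pose proof (is_RInt_antiderivative (fun t => - cos (m * t) / m) (fun t => sin (m * t)) 0 (2 * PI)) as H.
    cbv beta in H. rewrite Hperiod, cos_period, Rmult_0_r, cos_0 in H.
    replace (- (1) / m - - (1) / m) with 0 in H by (field; lra).
    apply H.
    + intros. auto_derive; auto. field. lra.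
    + intros. apply continuous_of_ex_derive. auto_derive. auto.
Qed.

Lemma is_RInt_cpoly_shifted l : forall n, is_RInt_C
  (fun t => Cmult (Cpow (cis t) (S n)) (cpoly_eval l (cis t))) 0 (2 * PI) (RtoC 0).
Proof.
  induction l as [|a l IH]; intro n; cbn [cpoly_eval].
  - apply (is_RInt_C_ext (fun _ => RtoC 0)); [intro; ring|].
    apply (is_RInt_RtoC (fun _ => 0)), is_RInt_R0.
  - apply (is_RInt_C_ext (fun t => Cplus (Cmult a (Cpow (cis t) (S n)))
                                      (Cmult (Cpow (cis t) (S (S n))) (cpoly_eval l (cis t))))).
    { intro t. rewrite (Cpow_S _ (S n)). ring. }
    replace (RtoC 0) with (Cplus (Cmult a (RtoC 0)) (RtoC 0)) by ring.
    apply is_RInt_Cplus; [apply is_RInt_Cmult_l, is_RInt_cis_pow | apply IH].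
Qed.

(* Only the constant term survives. *)
Lemma is_RInt_cpoly_circle l : is_RInt_C (fun t => cpoly_eval l (cis t)) 0 (2 * PI)
  (Cmult (RtoC (2 * PI)) (cpoly_eval l (RtoC 0))).
Proof.
  destruct l as [|a l]; simpl.
  - replace (Cmult (RtoC (2 * PI)) (RtoC 0)) with (RtoC 0) by ring.
    apply (is_RInt_RtoC (fun _ => 0)), is_RInt_R0.
  - replace (Cmult (RtoC (2 * PI)) (Cplus a (Cmult (RtoC 0) (cpoly_eval l (RtoC 0)))))
      with (Cplus (Cmult a (RtoC ((2 * PI) * 1))) (RtoC 0)) by (rewrite Rmult_1_r; ring).
    apply is_RInt_Cplus.
    + apply (is_RInt_C_ext (fun _ => Cmult a (RtoC 1))); [intro; ring|].
      apply is_RInt_Cmult_l, (is_RInt_RtoC (fun _ => 1)).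
      replace (2 * PI * 1) with (scal (2 * PI - 0) 1)
        by (unfold scal; simpl; unfold mult; simpl; ring).
      apply (is_RInt_const (V := R_NormedModule)).
    + apply (is_RInt_C_ext (fun t => Cmult (Cpow (cis t) 1) (cpoly_eval l (cis t))));
        [intro; rewrite Cpow_1_r; ring|].
      apply is_RInt_cpoly_shifted.
Qed.

Fixpoint cpoly_add (l m : list C) : list C :=
  match l, m with nil, _ => m | _, nil => l | a :: l', b :: m' => Cplus a b :: cpoly_add l' m' end.

Fixpoint cpoly_mul (l m : list C) : list C :=
  match l with nil => nil | a :: l' => cpoly_add (map (Cmult a) m) (RtoC 0 :: cpoly_mul l' m) end.

Fixpoint cpoly_pow (l : list C) (k : nat) : list C :=
  match k with O => RtoC 1 :: nil | S k' => cpoly_mul l (cpoly_pow l k') end.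

Lemma cpoly_eval_add l m w : cpoly_eval (cpoly_add l m) w = Cplus (cpoly_eval l w) (cpoly_eval m w).
Proof. revert m. induction l as [|a l IH]; intros [|b m]; cbn [cpoly_add cpoly_eval]; rewrite ?IH; ring. Qed.

Lemma cpoly_eval_scale a m w : cpoly_eval (map (Cmult a) m) w = Cmult a (cpoly_eval m w).
Proof. induction m as [|b m IH]; cbn [map cpoly_eval]; rewrite ?IH; ring. Qed.

Lemma cpoly_eval_mul l m w : cpoly_eval (cpoly_mul l m) w = Cmult (cpoly_eval l w) (cpoly_eval m w).
Proof.
  induction l as [|a l IH]; cbn [cpoly_mul cpoly_eval]; [ring|].
  rewrite cpoly_eval_add, cpoly_eval_scale. cbn [cpoly_eval]. rewrite IH. ring.
Qed.

Lemma cpoly_eval_pow l k w : cpoly_eval (cpoly_pow l k) w = Cpow (cpoly_eval l w) k.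
Proof.
  induction k as [|k IH]; cbn [cpoly_pow cpoly_eval Cpow]; [ring | rewrite cpoly_eval_mul, IH; reflexivity].
Qed.

(* On the parallel of colatitude [phi], [(x + i y) * conj (rx b (x + i y))] is [sin phi] times this
   quadratic polynomial in [e^{i theta}]. *)
Definition overlap_quadratic (b phi : R) : list C :=
  RtoC (sin phi * (1 + cos b) / 2) :: (0, sin b * cos phi) :: RtoC (sin phi * (1 - cos b) / 2) :: nil.

Lemma beam_rx_overlap_parallel k b phi theta :
  Cmult (RtoC (sin phi)) (Cmult (beam k (sph phi theta)) (Cconj (beam k (rx b (sph phi theta))))) =
  Cmult (RtoC (sin phi * sin phi ^ k)) (cpoly_eval (cpoly_pow (overlap_quadratic b phi) k) (cis theta)).
Proof.
  rewrite cpoly_eval_pow. unfold beam. rewrite Cpow_conj, <- Cpow_mult_l.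
  replace (Cmult (v1 (sph phi theta), v2 (sph phi theta))
                 (Cconj (v1 (rx b (sph phi theta)), v2 (rx b (sph phi theta)))))
    with (Cmult (RtoC (sin phi)) (cpoly_eval (overlap_quadratic b phi) (cis theta))).
  - rewrite Cpow_mult_l, <- RtoC_pow, RtoC_mult. ring.
  - unfold overlap_quadratic, sph, rx, cis, Cconj; simpl.
    pose proof (sin2_cos2 theta) as H. unfold Rsqr in H.
    apply injective_projections; simpl.
    + apply Rminus_diag_uniq.
      transitivity (sin phi * sin phi * (1 + cos b) / 2
                    * (1 - (sin theta * sin theta + cos theta * cos theta)));
        [field | rewrite H; ring].
    + field.
Qed.

Lemma sphere_int_beam_rx k b :
  sphere_int (fun u => Cmult (beam k u) (Cconj (beam k (rx b u))))
  = RtoC (2 * PI * ((1 + cos b) / 2) ^ k * sc_int 0 PI (2 * k + 1) 0).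
Proof.
  unfold sphere_int.
  rewrite (RInt_ext_C _
    (fun phi => RtoC (2 * PI * ((1 + cos b) / 2) ^ k * (sin phi ^ (2 * k + 1) * cos phi ^ 0)))).
  - apply is_RInt_unique_C, is_RInt_RtoC, (is_RInt_scal (V := R_NormedModule)), is_RInt_sc_int.
  - intros phi _. apply is_RInt_unique_C.
    apply (is_RInt_C_ext (fun theta => Cmult (RtoC (sin phi * sin phi ^ k))
      (cpoly_eval (cpoly_pow (overlap_quadratic b phi) k) (cis theta))));
      [intro; symmetry; apply beam_rx_overlap_parallel|].
    replace (RtoC (2 * PI * ((1 + cos b) / 2) ^ k * (sin phi ^ (2 * k + 1) * cos phi ^ 0)))
      with (Cmult (RtoC (sin phi * sin phi ^ k))
      (Cmult (RtoC (2 * PI)) (cpoly_eval (cpoly_pow (overlap_quadratic b phi) k) (RtoC 0)))).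
    + apply is_RInt_Cmult_l, is_RInt_cpoly_circle.
    + rewrite cpoly_eval_pow. unfold overlap_quadratic. cbn [cpoly_eval].
      rewrite Cmult_0_l, Cplus_0_r, <- RtoC_pow, <- !RtoC_mult. f_equal.
      replace (2 * k + 1)%nat with (S (k + k)) by lia.
      replace (sin phi * (1 + cos b) / 2) with (sin phi * ((1 + cos b) / 2)) by field.
      rewrite Rpow_mult_distr, <- tech_pow_Rmult, pow_add. simpl. ring.
Qed.

(** * The standard Gaussian beam *)

Lemma rx_0 u : rx 0 u = u.
Proof. destruct u as [u1 u2 u3]. unfold rx; simpl. rewrite cos_0, sin_0. f_equal; ring. Qed.

Lemma Cconj_RtoC r : Cconj (RtoC r) = RtoC r.
Proof. C_ring. Qed.

Lemma Q0c_beam k phi theta : 0 <= phi <= PI ->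
  Q0c k phi theta = Cmult (RtoC ((-1) ^ k * legendre_lead k)) (beam k (sph phi theta)).
Proof.
  intro Hphi. unfold Q0c. rewrite assocLegendre_diag_cos, beam_sph by exact Hphi.
  rewrite !RtoC_mult. ring.
Qed.

Lemma Ck_value k : Ck k = / sqrt (legendre_lead k ^ 2 * (2 * PI * sc_int 0 PI (2 * k + 1) 0)).
Proof.
  unfold Ck. do 2 f_equal.
  transitivity (fst (sphere_int (fun u => Cmult (RtoC (legendre_lead k ^ 2))
                                               (Cmult (beam k u) (Cconj (beam k (rx 0 u))))))).
  - apply (f_equal fst). unfold sphere_int. apply RInt_ext_C. intros phi Hphi.
    rewrite Rmin_left, Rmax_right in Hphi by (pose proof PI_RGT_0; lra).
    apply RInt_ext_C. intros theta _.
    rewrite rx_0, Q0c_beam, Cmult_conj, Cconj_RtoC by lra.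
    replace (legendre_lead k ^ 2) with ((-1) ^ k * legendre_lead k * ((-1) ^ k * legendre_lead k)).
    + rewrite !RtoC_mult. ring.
    + transitivity (((-1) * (-1)) ^ k * legendre_lead k ^ 2); [rewrite Rpow_mult_distr; ring|].
      replace (-1 * -1) with 1 by ring. rewrite pow1. ring.
  - rewrite sphere_int_scal, sphere_int_beam_rx, cos_0.
    + replace ((1 + 1) / 2) with 1 by field. rewrite pow1. simpl. ring.
    + apply is_poly_mult; [apply is_poly_beam | apply is_poly_conj, (is_poly_rx (beam k)), is_poly_beam].
Qed.

Definition beam_const (k : nat) : R := Ck k * ((-1) ^ k * legendre_lead k).

Lemma beam_const_normalized k : beam_const k ^ 2 * (2 * PI * sc_int 0 PI (2 * k + 1) 0) = 1.
Proof.
  pose proof (legendre_lead_neq0 k). pose proof (sc_int_sin_odd_pos k). pose proof PI_RGT_0.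
  assert (Hpos : 0 < legendre_lead k ^ 2 * (2 * PI * sc_int 0 PI (2 * k + 1) 0)).
  { apply Rmult_lt_0_compat; [apply pow2_gt_0; auto | apply Rmult_lt_0_compat; lra]. }
  unfold beam_const. rewrite Ck_value.
  set (N := legendre_lead k ^ 2 * (2 * PI * sc_int 0 PI (2 * k + 1) 0)) in *.
  replace ((/ sqrt N * ((-1) ^ k * legendre_lead k)) ^ 2 * (2 * PI * sc_int 0 PI (2 * k + 1) 0))
    with (((-1) ^ 2) ^ k * N / (sqrt N * sqrt N)).
  - rewrite sqrt_sqrt by lra. replace ((-1) ^ 2) with 1 by ring. rewrite pow1. field. lra.
  - replace (((-1) ^ 2) ^ k) with (((-1) ^ k) ^ 2) by (rewrite <- !pow_mult, Nat.mul_comm; reflexivity).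
    unfold N. field. apply Rgt_not_eq, sqrt_lt_R0. exact Hpos.
Qed.

Lemma exists_coords z : on_sphere z -> exists p : R * R, 0 <= fst p <= PI /\ sph (fst p) (snd p) = z.
Proof.
  destruct z as [z1 z2 z3]. unfold on_sphere, dot; simpl. intro Hz.
  assert (H3 : -1 <= z3 <= 1) by nra.
  set (phi := acos z3).
  assert (Hcos : cos phi = z3) by (apply cos_acos; auto).
  assert (Hsin2 : sin phi * sin phi = z1 * z1 + z2 * z2).
  { unfold phi. rewrite sin_acos, sqrt_sqrt by (auto; unfold Rsqr; nra). unfold Rsqr. lra. }
  assert (Hsin : 0 <= sin phi) by (unfold phi; rewrite sin_acos by auto; apply sqrt_pos).
  destruct (Req_dec (sin phi) 0) as [H0 | H0].
  - exists (phi, 0). split; [apply acos_bound|]. simpl.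
    assert (Z : z1 * z1 + z2 * z2 + 0 * 0 = 0) by (rewrite H0 in Hsin2; lra).
    apply sum_sq3_eq0 in Z as [-> [-> _]]. unfold sph. rewrite H0, Hcos. f_equal; ring.
  - destruct (exists_angle (z1 / sin phi) (z2 / sin phi)) as [theta [_ [Hc Hs]]].
    { replace (z1 / sin phi * (z1 / sin phi) + z2 / sin phi * (z2 / sin phi))
        with ((z1 * z1 + z2 * z2) / (sin phi * sin phi)) by (field; auto).
      rewrite Hsin2. field. rewrite <- Hsin2. apply Rmult_integral_contrapositive_currified; auto. }
    exists (phi, theta). split; [apply acos_bound|]. simpl.
    unfold sph. rewrite Hc, Hs, Hcos. f_equal; field; auto.
Qed.

Lemma Qpt_beam k z : on_sphere z -> Qpt k z = Cmult (RtoC (beam_const k)) (beam k z).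
Proof.
  intro Hz. unfold Qpt, coords.
  set (p := epsilon _ _).
  destruct (epsilon_spec (inhabits (0, 0)) (fun p => 0 <= fst p <= PI /\ sph (fst p) (snd p) = z)
              (exists_coords z Hz)) as [Hphi Hsph]. fold p in Hphi, Hsph.
  rewrite <- Hsph. unfold Qc. rewrite Q0c_beam by exact Hphi.
  unfold beam_const. rewrite !RtoC_mult. ring.
Qed.

(** * Two Gaussian beams *)

Lemma r3_of_pole M x : SO3 M -> on_sphere x -> mapply M x = north -> r3 M = x.
Proof.
  intros [_ [_ [N3 _]]] Hx Hm. unfold mapply, north in Hm. injection Hm as _ _ H3.
  destruct (r3 M) as [a b c], x as [x1 x2 x3]. unfold on_sphere, dot in *; simpl in *.
  assert (Z : (a - x1) * (a - x1) + (b - x2) * (b - x2) + (c - x3) * (c - x3) = 0) by nra.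
  apply sum_sq3_eq0 in Z. f_equal; lra.
Qed.

Lemma gaussian_beam_repr k x q : on_sphere x -> is_gaussian_beam k x q ->
  exists M c, SO3 M /\ r3 M = x /\
    forall y, on_sphere y -> q y = Cmult (cis c) (Cmult (RtoC (beam_const k)) (beam k (mapply M y))).
Proof.
  intros Hx [M [c [HM [Hn Hq]]]]. exists M, c. split; [exact HM|]. split; [apply r3_of_pole; auto|].
  intros y Hy. rewrite Hq, Qpt_beam by auto using on_sphere_mapply. reflexivity.
Qed.

(* [rel_rot M1 M2] is [M2 M1^T]. *)
Definition rel_rot (M1 M2 : mat3) : mat3 :=
  mkm (mapply M1 (r1 M2)) (mapply M1 (r2 M2)) (mapply M1 (r3 M2)).

Lemma mapply_rel_rot M1 M2 y : SO3 M1 -> mapply (rel_rot M1 M2) (mapply M1 y) = mapply M2 y.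
Proof. intro H. unfold rel_rot, mapply at 1; simpl. rewrite !SO3_dot by auto. reflexivity. Qed.

Lemma det3_mapply M a b c : dot (mapply M a) (cross (mapply M b) (mapply M c)) = det3 M * dot a (cross b c).
Proof.
  destruct M as [[m1 m2 m3] [m4 m5 m6] [m7 m8 m9]], a, b, c. unfold det3, mapply, cross, dot; simpl. ring.
Qed.

Lemma SO3_rel_rot M1 M2 : SO3 M1 -> SO3 M2 -> SO3 (rel_rot M1 M2).
Proof.
  intros H1 H2. pose proof H2 as [N1 [N2 [N3 [O12 [O13 [O23 D]]]]]].
  unfold SO3, rel_rot; simpl. rewrite !SO3_dot by auto. repeat split; auto.
  unfold det3; simpl. rewrite det3_mapply. destruct H1 as [_ [_ [_ [_ [_ [_ D1]]]]]].
  rewrite D1. fold (det3 M2). rewrite D. ring.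
Qed.

Lemma rx_fix_axis b v : v2 v = 0 -> v3 v = 0 -> rx b v = v.
Proof. destruct v as [w1 w2 w3]. simpl. intros -> ->. unfold rx; simpl. f_equal; ring. Qed.

Lemma rx_cos1 b v : cos b = 1 -> rx b v = v.
Proof.
  intro Hc. assert (Hs : sin b = 0) by (pose proof (sin2_cos2 b) as H; unfold Rsqr in H; nra).
  destruct v as [w1 w2 w3]. unfold rx; simpl. rewrite Hc, Hs. f_equal; ring.
Qed.

Lemma sin_neq0_of_distinct_poles a b t : on_sphere a -> on_sphere b -> a <> b -> a <> vopp b ->
  cos t = dot a b -> sin t <> 0.
Proof.
  intros Ha Hb Hab Hab' Hc Hs. pose proof (sin2_cos2 t) as H. rewrite Hs, Hc in H. unfold Rsqr in H.
  destruct a as [a1 a2 a3], b as [b1 b2 b3]. unfold on_sphere, dot, vopp in *; simpl in *.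
  assert (H' : (a1*b1 + a2*b2 + a3*b3 - 1) * (a1*b1 + a2*b2 + a3*b3 + 1) = 0) by lra.
  apply Rmult_integral in H' as [H' | H'].
  - apply Hab. assert (Z : (a1 - b1) * (a1 - b1) + (a2 - b2) * (a2 - b2) + (a3 - b3) * (a3 - b3) = 0) by nra.
    apply sum_sq3_eq0 in Z. f_equal; lra.
  - apply Hab'. assert (Z : (a1 + b1) * (a1 + b1) + (a2 + b2) * (a2 + b2) + (a3 + b3) * (a3 + b3) = 0) by nra.
    apply sum_sq3_eq0 in Z. f_equal; lra.
Qed.

Lemma cis_representative k psi : (1 <= k)%nat ->
  exists alpha, - PI / INR k <= alpha < PI / INR k /\ cis (INR k * alpha) = cis psi.
Proof.
  intro Hk. assert (Hkpos : 0 < INR k) by (apply lt_0_INR; lia).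
  destruct (exists_angle (cos psi) (sin psi)) as [t [Ht [Hc Hs]]].
  { pose proof (sin2_cos2 psi). unfold Rsqr in *. lra. }
  assert (Hcis : cis psi = cis t) by (unfold cis; rewrite Hc, Hs; reflexivity).
  rewrite Hcis. destruct (Req_dec t PI) as [Hpi | Hpi].
  - exists (- PI / INR k). split.
    + split; [lra|]. apply Rmult_lt_compat_r; [apply Rinv_0_lt_compat|]; pose proof PI_RGT_0; lra.
    + replace (INR k * (- PI / INR k)) with (- PI) by (field; lra). subst t.
      unfold cis. rewrite cos_neg, sin_neg, sin_PI, Ropp_0. reflexivity.
  - exists (t / INR k). split.
    + split; apply Rmult_le_compat_r || apply Rmult_lt_compat_r; try apply Rinv_0_lt_compat; try lra.
      apply Rlt_le, Rinv_0_lt_compat; lra.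
    + f_equal. field. lra.
Qed.

Lemma cos_half_acos_pow d k : -1 <= d <= 1 -> cos (acos d / 2) ^ (2 * k) = ((1 + d) / 2) ^ k.
Proof.
  intro Hd. rewrite pow_mult. f_equal.
  pose proof (cos_acos d Hd) as H. replace (acos d) with (2 * (acos d / 2)) in H at 1 by field.
  rewrite cos_2a_cos in H. simpl. lra.
Qed.

Lemma Cdiv_of_mult (a b r : C) : b <> RtoC 0 -> a = Cmult r b -> Cdiv a b = r.
Proof. intros Hb ->. field. exact Hb. Qed.

Section TwoBeams.

Variables (k : nat) (x1 x2 : vec3) (M1 M2 : mat3) (c1 c2 al be ga : R) (q1 q2 : vec3 -> C).
Hypothesis HM1 : SO3 M1.
Hypothesis HM2 : SO3 M2.
Hypothesis Hx1 : r3 M1 = x1.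
Hypothesis Hx2 : r3 M2 = x2.
Hypothesis Hq1 : forall y, on_sphere y ->
  q1 y = Cmult (cis c1) (Cmult (RtoC (beam_const k)) (beam k (mapply M1 y))).
Hypothesis Hq2 : forall y, on_sphere y ->
  q2 y = Cmult (cis c2) (Cmult (RtoC (beam_const k)) (beam k (mapply M2 y))).
Hypothesis Heuler : forall z, mapply (rel_rot M1 M2) z = rz al (rx be (rz ga z)).

Lemma cos_euler_be : cos be = dot x1 x2.
Proof.
  pose proof (f_equal v3 (Heuler north)) as E. unfold rel_rot, north, mapply, rz, rx, dot in E; simpl in E.
  rewrite Hx2 in E. unfold mapply in E; simpl in E. rewrite Hx1 in E. unfold dot in *. lra.
Qed.

Lemma beam_mapply_M2 y :
  beam k (mapply M2 y) = Cmult (cis (INR k * al)) (beam k (rx be (rz ga (mapply M1 y)))).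
Proof. rewrite <- (mapply_rel_rot M1 M2 y HM1), Heuler, beam_rz. reflexivity. Qed.

Lemma beam_overlap_rel_rot z :
  Cmult (beam k z) (Cconj (beam k (mapply (rel_rot M1 M2) z)))
  = Cmult (cis (- (INR k * (al + ga)))) (Cmult (beam k (rz ga z)) (Cconj (beam k (rx be (rz ga z))))).
Proof.
  rewrite Heuler, !beam_rz, Cmult_conj, cis_conj.
  replace (cis (- (INR k * al))) with (Cmult (cis (- (INR k * (al + ga)))) (cis (INR k * ga)))
    by (rewrite cis_add; f_equal; ring).
  ring.
Qed.

Lemma sphere_int_two_beams : sphere_int (fun y => Cmult (q1 y) (Cconj (q2 y)))
  = Cmult (cis (c1 - c2 - INR k * (al + ga))) (RtoC (((1 + cos be) / 2) ^ k)).
Proof.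
  set (K := beam_const k).
  set (F := fun z => Cmult (beam k z) (Cconj (beam k (mapply (rel_rot M1 M2) z)))).
  set (G := fun z => Cmult (beam k z) (Cconj (beam k (rx be z)))).
  assert (HG : is_poly G)
    by (apply is_poly_mult; [apply is_poly_beam | apply is_poly_conj, (is_poly_rx (beam k)), is_poly_beam]).
  assert (HF : is_poly F)
    by (apply is_poly_mult; [apply is_poly_beam | apply is_poly_conj, (is_poly_mapply (beam k)), is_poly_beam]).
  transitivity (sphere_int (fun y => Cmult (Cmult (cis (c1 - c2)) (RtoC (K * K))) (F (mapply M1 y)))).
  { apply sphere_int_ext. intros y Hy. unfold F. rewrite Hq1, Hq2, mapply_rel_rot by auto.
    rewrite !Cmult_conj, cis_conj, Cconj_RtoC, RtoC_mult. fold K. unfold Rminus. rewrite <- cis_add. ring. }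
  rewrite sphere_int_scal, sphere_int_SO3 by auto using is_poly_mapply.
  rewrite (sphere_int_ext F (fun z => Cmult (cis (- (INR k * (al + ga)))) (G (rz ga z))))
    by (intros; apply beam_overlap_rel_rot).
  rewrite sphere_int_scal, sphere_int_rz by auto using is_poly_rz.
  unfold G. rewrite sphere_int_beam_rx.
  pose proof (beam_const_normalized k) as HK. fold K in HK.
  replace (RtoC (((1 + cos be) / 2) ^ k))
    with (Cmult (RtoC (K * K)) (RtoC (2 * PI * ((1 + cos be) / 2) ^ k * sc_int 0 PI (2 * k + 1) 0))).
  - replace (cis (c1 - c2 - INR k * (al + ga))) with (Cmult (cis (c1 - c2)) (cis (- (INR k * (al + ga)))))
      by (rewrite cis_add; f_equal; ring).
    ring.
  - rewrite <- RtoC_mult. f_equal.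
    transitivity (((1 + cos be) / 2) ^ k * (K ^ 2 * (2 * PI * sc_int 0 PI (2 * k + 1) 0))); [ring|].
    rewrite HK. ring.
Qed.

Lemma two_beams_ratio y : on_sphere y -> rx be (rz ga (mapply M1 y)) = rz ga (mapply M1 y) ->
  q1 y = Cmult (cis (c1 - c2 - INR k * (al + ga))) (q2 y).
Proof.
  intros Hy Hfix. rewrite Hq1, Hq2, beam_mapply_M2, Hfix, beam_rz by auto.
  replace (cis c1) with (Cmult (Cmult (Cmult (cis (c1 - c2 - INR k * (al + ga))) (cis c2))
                                      (cis (INR k * al))) (cis (INR k * ga)))
    by (rewrite !cis_add; f_equal; ring).
  ring.
Qed.

Lemma beam2_neq0 y : great_circle x2 y -> q2 y <> RtoC 0.
Proof.
  intros [Hy Hd]. rewrite Hq2 by auto.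
  assert (HK : beam_const k <> 0).
  { intro E. pose proof (beam_const_normalized k) as HK. rewrite E in HK. simpl in HK. lra. }
  pose proof (on_sphere_mapply M2 y HM2 Hy) as Hu. unfold on_sphere, dot in Hu.
  assert (H3 : v3 (mapply M2 y) = 0) by (simpl; rewrite Hx2; exact Hd).
  repeat apply Cmult_neq_0.
  - apply cis_neq0.
  - intro E. injection E as E. contradiction.
  - apply beam_neq0. rewrite H3 in Hu. lra.
Qed.

Lemma fixed_on_both_circles y : sin be <> 0 -> great_circle x1 y -> great_circle x2 y ->
  rx be (rz ga (mapply M1 y)) = rz ga (mapply M1 y).
Proof.
  intros Hsb [Hy1 Hd1] [Hy2 Hd2]. set (v := rz ga (mapply M1 y)).
  assert (Hv3 : v3 v = 0) by (unfold v; simpl; rewrite Hx1; exact Hd1).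
  assert (Hrx3 : v3 (rx be v) = 0).
  { pose proof (f_equal v3 (mapply_rel_rot M1 M2 y HM1)) as E. rewrite Heuler in E.
    unfold v. simpl in E |- *. rewrite Hx2 in E. lra. }
  apply rx_fix_axis; auto.
  change (sin be * v2 v + cos be * v3 v = 0) in Hrx3. rewrite Hv3 in Hrx3.
  apply (Rmult_eq_reg_l (sin be)); [lra | exact Hsb].
Qed.

End TwoBeams.

Theorem lemma2p3 (k : nat) (x1 x2 : vec3) (q1 q2 : vec3 -> C) :
  (1 <= k)%nat ->
  on_sphere x1 -> on_sphere x2 ->
  is_gaussian_beam k x1 q1 -> is_gaussian_beam k x2 q2 ->
  let beta := acos (dot x1 x2) in
  exists alpha : R,
    - PI / INR k <= alpha < PI / INR k /\
    sphere_int (fun y => Cmult (q1 y) (Cconj (q2 y)))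
      = Cmult (cis (INR k * alpha)) (RtoC (cos (beta / 2) ^ (2 * k))) /\
    (x1 <> x2 -> x1 <> vopp x2 ->
       forall y, great_circle x1 y -> great_circle x2 y ->
         q2 y <> RtoC 0 /\ Cdiv (q1 y) (q2 y) = cis (INR k * alpha)) /\
    (x1 = x2 ->
       forall y, on_sphere y -> q2 y <> RtoC 0 ->
         Cdiv (q1 y) (q2 y) = cis (INR k * alpha)).
Proof.
  intros Hk Hx1 Hx2 Hb1 Hb2 beta.
  destruct (gaussian_beam_repr k x1 q1 Hx1 Hb1) as [M1 [c1 [HM1 [Hr1 Hq1]]]].
  destruct (gaussian_beam_repr k x2 q2 Hx2 Hb2) as [M2 [c2 [HM2 [Hr2 Hq2]]]].
  destruct (SO3_euler _ (SO3_rel_rot M1 M2 HM1 HM2)) as [al [be [ga Heuler]]].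
  pose proof (cos_euler_be x1 x2 M1 M2 al be ga Hr1 Hr2 Heuler) as Hcb.
  destruct (cis_representative k (c1 - c2 - INR k * (al + ga)) Hk) as [alpha [Hrange Hcis]].
  pose proof (two_beams_ratio k M1 M2 c1 c2 al be ga q1 q2 HM1 Hq1 Hq2 Heuler) as Hratio.
  exists alpha. rewrite Hcis. split; [exact Hrange|]. split; [|split].
  - rewrite (sphere_int_two_beams k M1 M2 c1 c2 al be ga q1 q2 HM1 Hq1 Hq2 Heuler).
    unfold beta. rewrite cos_half_acos_pow, Hcb; [reflexivity|]. rewrite <- Hcb. apply COS_bound.
  - intros Hne Hne' y Hy1 Hy2.
    assert (Hq2y : q2 y <> RtoC 0) by exact (beam2_neq0 k x2 M2 c2 q2 HM2 Hr2 Hq2 y Hy2).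
    split; [exact Hq2y|]. apply Cdiv_of_mult; [exact Hq2y|]. apply Hratio; [apply Hy1|].
    apply (fixed_on_both_circles x1 x2 M1 M2 al be ga HM1 Hr1 Hr2 Heuler); auto.
    apply (sin_neq0_of_distinct_poles x1 x2); auto.
  - intros Heq y Hy Hq2y. apply Cdiv_of_mult; [exact Hq2y|]. apply Hratio; [exact Hy|].
    apply rx_cos1. rewrite Hcb, <- Heq. exact Hx1.
Qed.
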